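(* Let $1\le l\le m$ and $0\le r<m-l$, and let $C=\Gamma_2G$ be the binary convolutional code generated by the semi-infinite matrix $G$ built from $G_0,\dots,G_{2^l-1}$ as described in the context. Then the free distance of the Euclidean dual $C^\perp$ equals $2^{r+1}$.
   Context: For $u,v\in\mathbf F_2^N$ the boolean product is $uv=(u_1v_1,\dots,u_Nv_N)$; a product of $i$ vectors has degree $i$. For $s\ge1$ let $b_0\in\mathbf F_2^{2^s}$ be the all-ones vector and for $1\le i\le s$ let $b_i\in\mathbf F_2^{2^s}$ be the concatenation of $2^{s-i}$ blocks $(\mathbf 0\,\mathbf 1)$, where $\mathbf 0,\mathbf 1\in\mathbf F_2^{2^{i-1}}$ are constant. Let $B_s^i$ be the matrix whose rows are all products of $i$ distinct elements of $\{b_1,\dots,b_s\}$ (with $B_s^0=b_0$; $B_s^i$ is empty for $i<0$ or $i>s$), and let $G_s^r$ be the matrix with rows $B_s^r,B_s^{r-1},\dots,B_s^0$ stacked (empty if $r<0$); it generates the Reed–Muller code $\mathcal R(r,s)$ of length $2^s$, dimension $\sum_{i=0}^r\binom si$, minimum distance $2^{s-r}$, with $\mathcal R(r,s)^\perp=\mathcal R(s-1-r,s)$. Let $w_j=(1,1,0,\dots,0)\in\mathbf F_2^{2^j}$ and $c\,w_j$ the concatenation of $c$ copies. For $0\le i\le l-1$ let $M_{i,l}=(2^{l-i-1}w_{i+1})\otimes B_{m-l}^{r-i}$ (Kronecker product; a $\binom{m-l}{r-i}\times2^m$ matrix) and $M_{l,l}=[G_{m-l}^{r-l}\ 0\ \cdots\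 0]$ ($2^m$ columns). Define $G_0,\dots,G_{2^l-1}$, each with $2^{m-l}$ columns, by $[G_0\ G_1\ \cdots\ G_{2^l-1}]$ = the matrix with row blocks $M_{0,l},\dots,M_{l,l}$ stacked. Then $G$ is the semi-infinite matrix whose $j$-th block row ($j\ge0$) has $G_0,G_1,\dots,G_{2^l-1}$ in block columns $j,j+1,\dots,j+2^l-1$ and zeros elsewhere. $\Gamma_2$ is the set of finitely supported binary sequences, $\Gamma_2G$ the set of finite linear combinations of rows of $G$, $C^\perp=\{u\in\Gamma_2:\sum_iu_iv_i=0\ \forall v\in C\}$; free distance = minimum number of nonzero entries of a nonzero element. *)

From mathcomp Require Import all_boot all_algebra.
Set Implicit Arguments. Unset Strict Implicit. Unset Printing Implicit Defensive.
Import GRing.Theory.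
Local Open Scope ring_scope.

(* b_k in F_2^{2^s}, entry at 0-based position c < 2^s.
   b_0 = all ones; for k >= 1, b_k is the concatenation of blocks (0 1),
   each half of length 2^(k-1): entry is 1 iff (c mod 2^k) >= 2^(k-1). *)
Definition bvec (k c : nat) : 'F_2 :=
  if k == 0%N then 1 else ((2 ^ k.-1 <= c %% 2 ^ k)%N : bool)%:R.

(* Row of B_s^i indexed by the subset A of {b_1..b_s} (element k : 'I_s
   stands for b_(k+1)); the empty product is b_0. *)
Definition prodrow (s : nat) (A : {set 'I_s}) (c : nat) : 'F_2 :=
  if A == set0 then bvec 0 c else \prod_(k in A) bvec k.+1 c.

(* Entry j (0-based, j < 2^l) of (2^(l-i-1) w_(i+1)), w_(i+1) = (1,1,0,...,0)
   of length 2^(i+1). *)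
Definition wrep (i j : nat) : 'F_2 := ((j %% 2 ^ i.+1 < 2)%N : bool)%:R.

(* Row labels of the stacked matrix [M_{0,l}; ...; M_{l,l}]:
   (i, A) with i < l and #|A| = r - i  (a row of M_{i,l}, from B_{m-l}^{r-i}),
   or i = l and #|A| <= r - l   (a row of M_{l,l}, from G_{m-l}^{r-l}).
   Blocks with negative degree are empty, hence the requirement i <= r. *)
Definition valid_label (m l r : nat) (i : nat) (A : {set 'I_(m - l)}) : bool :=
  [&& (i <= r)%N, (i <= l)%N &
      if (i < l)%N then #|A| == (r - i)%N else (#|A| <= r - l)%N].

Definition Gblock (m l : nat) (j i : nat) (A : {set 'I_(m - l)}) (c : nat)
  : 'F_2 :=
  if (i < l)%N then wrep i j * prodrow A c
  else if j == 0%N then prodrow A c else 0.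

(* Entry at position n of the row of the semi-infinite matrix G lying in
   block row t with label (i,A): G_k sits in block column t + k. *)
Definition Grow (m l : nat) (t i : nat) (A : {set 'I_(m - l)}) (n : nat)
  : 'F_2 :=
  let blk := (n %/ 2 ^ (m - l))%N in
  let c := (n %% 2 ^ (m - l))%N in
  if (t <= blk)%N && (blk < t + 2 ^ l)%N then @Gblock m l (blk - t)%N i A c else 0.

(* C = Gamma_2 G : finite linear combinations of rows of G. *)
Definition inCode (m l r : nat) (v : nat -> 'F_2) : Prop :=
  exists S : seq (nat * nat * {set 'I_(m - l)} * 'F_2),
    all (fun p => @valid_label m l r p.1.1.2 p.1.2) S /\
    forall n, v n = \sum_(p <- S) p.2 * @Grow m l p.1.1.1 p.1.1.2 p.1.2 n.

(* Gamma_2 : finitely supported binary sequences, represented as finite lists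
   (entries beyond the list are 0). *)
Definition nonzero (u : seq 'F_2) : bool := has (fun x => x != 0) u.
Definition weight (u : seq 'F_2) : nat := count (fun x => x != 0) u.

Definition inDual (m l r : nat) (u : seq 'F_2) : Prop :=
  forall v, inCode m l r v -> \sum_(n < size u) u`_n * v n = 0.

From mathcomp Require Import all_boot all_algebra zify.
Set Implicit Arguments. Unset Strict Implicit. Unset Printing Implicit Defensive.
Import GRing.Theory.
Local Open Scope ring_scope.

(* The first block G_0 of G has as rows all monomials of degree at most r in
   b_1, ..., b_(m-l) (the factors w_(i+1) start with a 1), so it generates the
   Reed-Muller code R(r, m-l).  A word of R(r, m-l)^perp placed in the first
   block is orthogonal to every row of G: rows starting at block 0 restrict
   there to rows of G_0, and later rows vanish there; the monomial
   b_(r+2) ... b_(m-l) of weight 2^(r+1) is such a word.  Conversely, the last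
   nonzero block of a nonzero word of C^perp meets the rows of G starting at
   that block only through G_0, so it is a nonzero word of R(r, m-l)^perp,
   whose minimum distance 2^(r+1) follows from the (u | u + v) decomposition. *)

Lemma pchar_F2 : (2 \in [pchar 'F_2])%N. Proof. exact: (@pchar_Fp 2). Qed.

Lemma F2_addrr (a : 'F_2) : a + a = 0.
Proof. exact: addrr_pchar2 pchar_F2 a. Qed.

Lemma F2_addr_eq0 (a b : 'F_2) : (a + b == 0) = (a == b).
Proof. by rewrite addr_eq0 (oppr_pchar2 pchar_F2). Qed.

Lemma neq0_addr_leq (V : zmodType) (a b : V) :
  (((a + b)%R != 0%R) <= (a != 0%R) + (b != 0%R))%N.
Proof.
have [->|_] := eqVneq a 0; first by rewrite add0r.
by case: (_ + _ != _); case: (b != 0).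
Qed.

Lemma big_ord_exp2S (R : Type) (idx : R) (op : Monoid.law idx) (F : nat -> R) t :
  \big[op/idx]_(c < 2 ^ t.+1) F c =
  op (\big[op/idx]_(c < 2 ^ t) F c) (\big[op/idx]_(c < 2 ^ t) F (2 ^ t + c)%N).
Proof. by rewrite expnS mul2n -addnn big_split_ord. Qed.

Lemma big_ord_widen_idx (R : Type) (idx : R) (op : Monoid.law idx) (F : nat -> R) n1 n2 :
  (n1 <= n2)%N -> (forall n, (n1 <= n)%N -> F n = idx) ->
  \big[op/idx]_(n < n1) F n = \big[op/idx]_(n < n2) F n.
Proof.
move=> le12 F0; rewrite (big_ord_widen n2 F le12) big_mkcond.
by apply: eq_bigr => n _; case: ltnP => // /F0 ->.
Qed.

Lemma big_ord_split3 (R : Type) (idx : R) (op : Monoid.law idx) (F : nat -> R) a w M :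
  (a + w <= M)%N ->
  \big[op/idx]_(n < M) F n =
  op (op (\big[op/idx]_(n < a) F n) (\big[op/idx]_(c < w) F (a + c)%N))
     (\big[op/idx]_(a + w <= n < M) F n).
Proof.
move=> leM; rewrite -(big_mkord xpredT) (big_cat_nat (leq0n _) leM).
rewrite (big_cat_nat (leq0n a) (leq_addr w a)) big_mkord; congr (op (op _ _) _).
by rewrite -{1}[a]add0n big_addn addKn big_mkord; under eq_bigr do rewrite addnC.
Qed.

Lemma big_ord_window (R : Type) (idx : R) (op : Monoid.law idx) (F : nat -> R) a w M :
  (forall n, (n < a)%N || (a + w <= n)%N -> F n = idx) ->
  (forall n, (M <= n)%N -> F n = idx) ->
  \big[op/idx]_(n < M) F n = \big[op/idx]_(c < w) F (a + c)%N.
Proof.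
move=> Fout FM; rewrite (big_ord_widen_idx _ (leq_maxl M (a + w)) FM).
rewrite (big_ord_split3 _ _ (leq_maxr _ _)).
rewrite [X in op (op X _) _]big1 => [|n _]; last by apply: Fout; rewrite ltn_ord.
rewrite [X in op _ X]big1_seq ?Monoid.mul1m ?Monoid.mulm1 // => n /andP[_].
by rewrite mem_iota => /andP[le_n _]; apply: Fout; rewrite le_n orbT.
Qed.

Lemma leq_sum_window (F : nat -> nat) a w M : (forall n, (M <= n)%N -> F n = 0%N) ->
  (\sum_(c < w) F (a + c)%N <= \sum_(n < M) F n)%N.
Proof.
move=> FM; rewrite (big_ord_widen_idx _ (leq_maxl M (a + w)) FM).
rewrite (big_ord_split3 _ _ (leq_maxr _ _)) /= -addnA.
exact: leq_trans (leq_addr _ _) (leq_addl _ _).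
Qed.

(* The product of the b_(k+1), k \in B; for B uniq of size i these are the
   rows of B_s^i, so they span R(r, s) when size B ranges up to r. *)
Definition mono (B : seq nat) (c : nat) : 'F_2 := \prod_(k <- B) bvec k.+1 c.

Definition wt (s : nat) (y : nat -> 'F_2) : nat := \sum_(c < 2 ^ s) (y c != 0%R).

(* [y], read as a word of length 2^s, lies in R(r, s)^perp. *)
Definition RM_orth (s r : nat) (y : nat -> 'F_2) : Prop :=
  forall B, uniq B -> all (fun k => k < s)%N B -> (size B <= r)%N ->
  \sum_(c < 2 ^ s) y c * mono B c = 0.

Lemma bvecS_low t c : (c < 2 ^ t)%N -> bvec t.+1 c = 0.
Proof.
move=> lt_c; rewrite /bvec /= modn_small ?(leq_trans lt_c) ?leq_exp2l //.
by rewrite leqNgt lt_c.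
Qed.

Lemma bvecS_high t c : (c < 2 ^ t)%N -> bvec t.+1 (2 ^ t + c) = 1.
Proof.
move=> lt_c; rewrite /bvec /= modn_small ?leq_addr //.
by rewrite expnS mul2n -addnn ltn_add2l.
Qed.

Lemma bvec_addexp k t c : (k < t)%N -> bvec k.+1 (2 ^ t + c) = bvec k.+1 c.
Proof.
move=> lt_kt; rewrite /bvec /=.
by rewrite -(subnK lt_kt) expnD modnMDl.
Qed.

Lemma mono_cat B B' c : mono (B ++ B') c = mono B c * mono B' c.
Proof. exact: big_cat. Qed.

Lemma mono_low t B c : t \in B -> (c < 2 ^ t)%N -> mono B c = 0.
Proof.
move=> tB lt_c; apply/eqP; rewrite prodf_seq_eq0.
by apply/hasP; exists t => //; rewrite bvecS_low.
Qed.

Lemma mono_addexp t B c : all (fun k => k < t)%N B -> mono B (2 ^ t + c) = mono B c.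
Proof. by move=> /allP ltB; apply: eq_big_seq => k /ltB /bvec_addexp ->. Qed.

Lemma mono_high t B c : all (fun k => k < t.+1)%N B -> (c < 2 ^ t)%N ->
  mono B (2 ^ t + c) = mono [seq k <- B | k != t] c.
Proof.
move=> /allP ltB lt_c; rewrite /mono (bigID (pred1 t)) /= big1 ?mul1r; last first.
  by move=> k /eqP ->; rewrite bvecS_high.
rewrite -big_filter; apply: eq_big_seq => k; rewrite mem_filter => /andP[ne_kt kB].
by rewrite bvec_addexp // ltn_neqAle ne_kt -ltnS ltB.
Qed.

Lemma all_filter_neq t B : all (fun k => k < t.+1)%N B ->
  all (fun k => k < t)%N [seq k <- B | k != t].
Proof.
move=> /allP ltB; apply/allP => k; rewrite mem_filter => /andP[ne_kt kB].
by rewrite ltn_neqAle ne_kt -ltnS ltB.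
Qed.

Lemma filter_neq_id (t : nat) B : t \notin B -> [seq k <- B | k != t] = B.
Proof. by move=> tB; apply/all_filterP/allP => k kB; apply: contraNneq tB => <-. Qed.

Lemma size_filter_neq (t : nat) B :
  (size [seq k <- B | k != t] + count_mem t B)%N = size B.
Proof. by rewrite size_filter addnC -(count_predC (pred1 t)). Qed.

Lemma sum_mono_eq0 t B : all (fun k => k < t)%N B -> (size B < t)%N ->
  \sum_(c < 2 ^ t) mono B c = 0.
Proof.
elim: t B => [|t IH] B ltB sB //; have ltB' := all_filter_neq ltB.
rewrite big_ord_exp2S /=; under [X in _ + X]eq_bigr do rewrite mono_high //.
have [tB | tB] := boolP (t \in B); last by rewrite filter_neq_id // F2_addrr.
rewrite big1 ?add0r => [|c _]; last exact: mono_low tB _.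
apply: IH => //; rewrite -has_pred1 has_count in tB.
move: tB sB; rewrite -(size_filter_neq t B) ltnS => c_gt0 le_t.
by apply: leq_trans le_t; rewrite -addn1 leq_add2l.
Qed.

Lemma wt_mono t B : uniq B -> all (fun k => k < t)%N B ->
  wt t (mono B) = (2 ^ (t - size B))%N.
Proof.
elim: t B => [|t IH] B uB ltB.
  by case: B ltB {uB} => [|k B] //=; rewrite /wt big_ord1 /mono big_nil oner_neq0.
rewrite /wt (big_ord_exp2S _ (fun c => (mono B c != 0 : nat))) /=.
under [X in (_ + X)%N]eq_bigr do rewrite mono_high //.
rewrite -[X in (_ + X)%N]/(wt t _) IH ?filter_uniq ?all_filter_neq //.
have [tB | tB] := boolP (t \in B).
  rewrite big1 ?add0n => [|c _]; last by rewrite (mono_low tB).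
  have := size_filter_neq t B; rewrite count_uniq_mem // tB => <-.
  by rewrite addn1 subSS.
have ltB' : all (fun k => k < t)%N B by rewrite -(filter_neq_id tB) all_filter_neq.
have : (size B <= t)%N.
  rewrite -[t](size_iota 0); apply: uniq_leq_size => // k /(allP ltB').
  by rewrite mem_iota.
by rewrite filter_neq_id // -/(wt t _) IH // addnn -mul2n -expnS => /subSn ->.
Qed.

Lemma RM_orth_mono s r : (r < s)%N -> RM_orth s r (mono (iota r.+1 (s - r.+1))).
Proof.
move=> lt_rs B _ ltB sB; under eq_bigr do rewrite -mono_cat.
apply: sum_mono_eq0; rewrite ?size_cat ?size_iota.
  by rewrite all_cat ltB andbT; apply/allP => k; rewrite mem_iota; lia.
by apply: leq_ltn_trans (leq_add (leqnn _) sB) _; lia.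
Qed.

Lemma RM_orth_add_halves s r y : RM_orth s.+1 r y ->
  RM_orth s r (fun c => y c + y (2 ^ s + c)%N).
Proof.
move=> Hy B uB ltB sB.
have ltB' : all (fun k => k < s.+1)%N B by apply: sub_all ltB => k /ltnW.
rewrite -[RHS](Hy B uB ltB' sB) (big_ord_exp2S _ (fun c => y c * mono B c)).
rewrite /= -big_split.
by apply: eq_bigr => c _; rewrite mono_addexp // mulrDl.
Qed.

(* [mono (s :: B)] vanishes on the lower half and is [mono B] on the upper. *)
Lemma RM_orth_high_half s r y : RM_orth s.+1 r.+1 y ->
  RM_orth s r (fun c => y (2 ^ s + c)%N).
Proof.
move=> Hy B uB ltB sB.
have sB' : s \notin B by apply/negP => /(allP ltB); rewrite ltnn.
have ltB' : all (fun k => k < s.+1)%N (s :: B).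
  by rewrite /= ltnSn; apply: sub_all ltB => k /ltnW.
have uB' : uniq (s :: B) by rewrite /= sB' uB.
have := Hy _ uB' ltB' sB.
rewrite (big_ord_exp2S _ (fun c => y c * mono (s :: B) c)) /=.
rewrite big1 ?add0r => [high0|c _]; last by rewrite (mono_low (mem_head _ _)) ?mulr0.
rewrite -[RHS]high0; apply: eq_bigr => c _.
by rewrite mono_high //= eqxx /= filter_neq_id.
Qed.

Lemma wt_eq0 s (y : nat -> 'F_2) : wt s y = 0%N -> forall c, (c < 2 ^ s)%N -> y c = 0.
Proof.
move/eqP; rewrite sum_nat_eq0 => /forallP y0 c lt_c.
by have := y0 (Ordinal lt_c); rewrite eqb0 negbK => /eqP.
Qed.

Lemma wt_gt0P s (y : nat -> 'F_2) :
  reflect (exists2 c, (c < 2 ^ s)%N & y c != 0) (0 < wt s y)%N.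
Proof.
rewrite lt0n sum_nat_eq0; apply: (iffP forallPn) => [[c] | [c lt_c yc]].
  by rewrite eqb0 negbK => yc; exists c.
by exists (Ordinal lt_c); rewrite eqb0 negbK.
Qed.

Lemma wt_exp2S s (y : nat -> 'F_2) :
  wt s.+1 y = (wt s y + wt s (fun c => y (2 ^ s + c)%N))%N.
Proof. exact: (big_ord_exp2S _ (fun c => (y c != 0 : nat))). Qed.

Lemma wt_add_halves s (y : nat -> 'F_2) :
  (wt s (fun c => (y c + y (2 ^ s + c)%N)%R) <= wt s.+1 y)%N.
Proof. by rewrite wt_exp2S /wt -big_split leq_sum // => c _; apply: neq0_addr_leq. Qed.

(* If the halves of [y] differ, their sum is a nonzero word of R(r, s-1)^perp;
   otherwise [y] has twice the weight of its upper half, a word of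
   R(r-1, s-1)^perp. *)
Lemma RM_orth_wt s r y : RM_orth s r y -> (0 < wt s y)%N -> (2 ^ r.+1 <= wt s y)%N.
Proof.
elim: s r y => [|s IH] r y Hy wt_gt0.
  have := Hy [::] isT isT (leq0n r); rewrite big_ord1 /mono big_nil mulr1 => y0.
  by rewrite /wt big_ord1 y0 in wt_gt0.
set z := fun c => y c + y (2 ^ s + c)%N; set y1 := fun c => y (2 ^ s + c)%N.
have [wt_z0 | wt_z_gt0] := posnP (wt s z); last first.
  exact: leq_trans (IH r z (RM_orth_add_halves Hy) wt_z_gt0) (wt_add_halves s y).
have wt_y : wt s.+1 y = (wt s y1).*2.
  rewrite wt_exp2S -addnn; congr (_ + _)%N; apply: eq_bigr => c _.
  by have /eqP := wt_eq0 wt_z0 (ltn_ord c); rewrite F2_addr_eq0 => /eqP ->.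
rewrite wt_y -mul2n expnS leq_pmul2l //.
case: r Hy => [|r] Hy; first by move: wt_gt0; rewrite wt_y double_gt0.
by apply: IH (RM_orth_high_half Hy) _; move: wt_gt0; rewrite wt_y double_gt0.
Qed.

Lemma prodrow_mono s (A : {set 'I_s}) c :
  prodrow A c = mono [seq val k | k <- enum A] c.
Proof.
by rewrite /mono big_map big_enum /prodrow; case: eqP => [->|] //; rewrite big_set0.
Qed.

Lemma mono_prodrow s B : uniq B -> all (fun k => k < s)%N B ->
  exists A : {set 'I_s}, #|A| = size B /\ forall c, prodrow A c = mono B c.
Proof.
move=> uB /allP ltB; exists [set k : 'I_s | val k \in B].
have AB : perm_eq [seq val k | k <- enum [set k : 'I_s | val k \in B]] B.
  apply: uniq_perm => //; first by rewrite map_inj_uniq ?enum_uniq //; apply: val_inj.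
  move=> k; apply/mapP/idP => [[k' + ->]|kB]; first by rewrite mem_enum inE.
  by exists (Ordinal (ltB k kB)); rewrite ?mem_enum ?inE.
split; first by rewrite cardE -(size_map val) (perm_size AB).
by move=> c; rewrite prodrow_mono /mono (perm_big _ AB).
Qed.

Lemma RM_orth_prodrow s r y (A : {set 'I_s}) : RM_orth s r y -> (#|A| <= r)%N ->
  \sum_(c < 2 ^ s) y c * prodrow A c = 0.
Proof.
move=> Hy cardA; under eq_bigr do rewrite prodrow_mono.
apply: Hy; first by rewrite map_inj_uniq ?enum_uniq //; apply: val_inj.
  by apply/allP => k /mapP[k' _ ->]; apply: ltn_ord.
by rewrite size_map -cardE.
Qed.

Lemma weight_nth u : weight u = (\sum_(n < size u) ((u`_n)%R != 0%R))%N.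
Proof. by rewrite /weight -sum1_count (big_nth 0%R) big_mkord big_mkcond. Qed.

Lemma weight_mkseq s y : weight (mkseq y (2 ^ s)) = wt s y.
Proof. by rewrite weight_nth size_mkseq; apply: eq_bigr => c _; rewrite nth_mkseq. Qed.

Section ConvolutionalCode.

Variables m l r : nat.
Local Notation s := (m - l)%N.

Lemma valid_label_card i (A : {set 'I_s}) : @valid_label m l r i A -> (#|A| <= r)%N.
Proof.
case/and3P => _ _; case: ifP => _; first by move/eqP => ->; rewrite leq_subr.
by move/leq_trans; apply; rewrite leq_subr.
Qed.

Lemma valid_label_exists (A : {set 'I_s}) : (#|A| <= r)%N ->
  exists i, @valid_label m l r i A.
Proof.
move=> cardA; rewrite /valid_label.
have [lt_ri | le_ir] := ltnP r (#|A| + l).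
  have lt_l : (r - #|A| < l)%N by move: #|A| cardA lt_ri => k; lia.
  by exists (r - #|A|)%N; rewrite leq_subr lt_l ltnW // subKn // eqxx.
have le_lr : (l <= r)%N := leq_trans (leq_addl _ _) le_ir.
by exists l; rewrite ltnn leqnn le_lr leq_subRL // addnC.
Qed.

Lemma inCode_Grow t i (A : {set 'I_s}) :
  @valid_label m l r i A -> inCode m l r (@Grow m l t i A).
Proof.
by move=> lab; exists [:: (t, i, A, 1)]; split => [|n]; rewrite /= ?lab ?big_seq1 ?mul1r.
Qed.

Lemma Grow_before t i (A : {set 'I_s}) n :
  (n < t * 2 ^ s)%N -> @Grow m l t i A n = 0.
Proof.
rewrite -ltn_divLR ?expn_gt0 // => lt_nt.
by rewrite /Grow leqNgt lt_nt.
Qed.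

Lemma Grow_at t i (A : {set 'I_s}) c :
  (c < 2 ^ s)%N -> @Grow m l t i A (t * 2 ^ s + c) = prodrow A c.
Proof.
move=> lt_c; rewrite /Grow divnMDl ?expn_gt0 // divn_small // addn0 leqnn /=.
rewrite -{1}(addn0 t) ltn_add2l expn_gt0 /= subnn modnMDl modn_small //.
by rewrite /Gblock; case: ifP => // _; rewrite /wrep mod0n mul1r.
Qed.

Lemma Grow_block0 t i (A : {set 'I_s}) c :
  (c < 2 ^ s)%N -> @Grow m l t i A c = if t == 0%N then prodrow A c else 0.
Proof.
case: t => [|t] lt_c /=; first by rewrite -(Grow_at 0 i A lt_c) mul0n.
by apply: Grow_before; apply: leq_trans lt_c _; rewrite mulSn leq_addr.
Qed.

Lemma inDual_block0 y : RM_orth s r y -> inDual m l r (mkseq y (2 ^ s)).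
Proof.
move=> Hy v [S [labS Hv]]; rewrite size_mkseq.
under eq_bigr => c _ do rewrite nth_mkseq // Hv mulr_sumr.
rewrite exchange_big big1_seq //= => p pS.
under eq_bigr => c _ do rewrite mulrCA Grow_block0 //.
rewrite -mulr_sumr; case: eqP => _; last by rewrite big1 ?mulr0 // => c _; rewrite mulr0.
by rewrite (RM_orth_prodrow Hy) ?mulr0 // (valid_label_card (allP labS p pS)).
Qed.

Lemma inDual_last_block u K : inDual m l r u ->
  (forall n, (K.+1 * 2 ^ s <= n)%N -> u`_n = 0) ->
  RM_orth s r (fun c => u`_(K * 2 ^ s + c)).
Proof.
move=> Hu u0 B uB ltB sB; have [A [cardA AB]] := mono_prodrow uB ltB.
have [i lab] : exists i, @valid_label m l r i A.
  by apply: valid_label_exists; rewrite cardA.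
rewrite -[RHS](Hu _ (inCode_Grow K lab)).
rewrite (@big_ord_window _ _ _ (fun n => u`_n * @Grow m l K i A n) (K * 2 ^ s) (2 ^ s)).
- by apply: eq_bigr => c _; rewrite Grow_at // AB.
- move=> n /orP[/Grow_before -> | ]; first by rewrite mulr0.
  by rewrite addnC -mulSn => /u0 ->; rewrite mul0r.
by move=> n /(nth_default 0) ->; rewrite mul0r.
Qed.

Lemma inDual_weight u : inDual m l r u -> nonzero u -> (2 ^ r.+1 <= weight u)%N.
Proof.
move=> Hu nz_u; pose block K c := u`_(K * 2 ^ s + c).
have block_gt0 n : u`_n != 0 -> (0 < wt s (block (n %/ 2 ^ s)))%N.
  move=> un; apply/wt_gt0P; exists (n %% 2 ^ s)%N; first by rewrite ltn_pmod ?expn_gt0.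
  by rewrite /block -divn_eq.
have exK : exists K, (0 < wt s (block K))%N.
  by case/hasP: nz_u => x /(nthP 0)[n _ <-] /block_gt0; exists (n %/ 2 ^ s)%N.
have boundK K : (0 < wt s (block K))%N -> (K <= size u)%N.
  case/wt_gt0P => c _; apply: contraNT; rewrite -ltnNge => lt_uK.
  rewrite /block nth_default ?eqxx //.
  apply: leq_trans (ltnW lt_uK) (leq_trans _ (leq_addr _ _)).
  by rewrite leq_pmulr ?expn_gt0.
have [K wtK maxK] := ex_maxnP exK boundK.
have u0 n : (K.+1 * 2 ^ s <= n)%N -> u`_n = 0.
  move=> le_n; apply/eqP; apply: contraTT le_n => /block_gt0/maxK.
  by rewrite -ltnNge -ltn_divLR ?expn_gt0.
apply: leq_trans (RM_orth_wt (inDual_last_block Hu u0) wtK) _.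
rewrite weight_nth; apply: (@leq_sum_window (fun n => (u`_n != 0%R) : nat)).
by move=> n /(nth_default 0) ->.
Qed.

End ConvolutionalCode.

Theorem mainTheorem11 (m l r : nat) :
  (1 <= l)%N -> (l <= m)%N -> (r < m - l)%N ->
  (exists u, inDual m l r u /\ nonzero u /\ weight u = (2 ^ r.+1)%N) /\
  (forall u, inDual m l r u -> nonzero u -> (2 ^ r.+1 <= weight u)%N).
Proof.
move=> _ _ lt_r; split; last exact: inDual_weight.
pose T := iota r.+1 (m - l - r.+1).
have wt_T : wt (m - l) (mono T) = (2 ^ r.+1)%N.
  rewrite wt_mono ?iota_uniq ?size_iota ?subKn //.
  by apply/allP => k; rewrite mem_iota; lia.
exists (mkseq (mono T) (2 ^ (m - l))); rewrite weight_mkseq wt_T.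
split; first exact/inDual_block0/RM_orth_mono.
by rewrite /nonzero has_count -/(weight _) weight_mkseq wt_T expn_gt0.
Qed.
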